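(* Let $X_n=\{0,1\}^n\setminus\{0^n\}$ and let $\mathcal{C}_n$ be the class of negative parity functions over $X_n$, i.e. $\lnot\oplus_s:X_n\to\{0,1\}$, $\lnot\oplus_s(x)=1-(s\cdot x\bmod 2)$, for $s\in\{0,1\}^n$. For any query function $g:\{0,1\}^n\to\{-1,+1\}$, there are at most $2^{n/2+2}$ predicates in $\mathcal{C}_n$ that are not $2^{-n/4}$-independent from $g$.
   Context: For $f\in\mathcal{C}_n$ let $S_f=\{x\in X_n: f(x)=1\}$. A predicate $f$ is $\xi$-independent from $g$ if $\left|\mathbf{E}_{x\in S_f}[g(x)]-\mathbf{E}_{x\in\{0,1\}^n}[g(x)]\right|\le\xi$, expectations over the uniform distribution on the indicated sets. *)

From HB Require Import structures.
From mathcomp Require Import all_boot all_order all_algebra.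
From mathcomp Require Import reals exp.
Set Implicit Arguments. Unset Strict Implicit. Unset Printing Implicit Defensive.
Import Order.TTheory GRing.Theory Num.Theory.
Local Open Scope ring_scope.

Definition cube (n : nat) := {ffun 'I_n -> bool}.

Definition Xn (n : nat) : {set cube n} := [set x : cube n | x != [ffun=> false]].

Definition neg_parity (n : nat) (s : cube n) (x : cube n) : nat :=
  (1 - (\sum_(i < n) ((s i && x i) : nat)) %% 2)%N.

Definition S_f (n : nat) (f : cube n -> nat) : {set cube n} :=
  [set x in Xn n | f x == 1%N].

(* uniform expectation over a finite set (0 on the empty set) *)
Definition avg (R : realType) (T : finType) (A : {set T}) (g : T -> R) : R :=
  (\sum_(x in A) g x) / #|A|%:R.

Definition xi_independent (R : realType) (n : nat) (f : cube n -> nat)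
  (g : cube n -> R) (xi : R) : bool :=
  `| avg (S_f f) g - avg [set: cube n] g | <= xi.

From mathcomp Require Import all_boot all_order all_algebra.
From mathcomp Require Import reals exp ring lra.
Import Order.TTheory GRing.Theory Num.Theory.
Local Open Scope ring_scope.
Set Implicit Arguments. Unset Strict Implicit.

(* Write N = 2^n, r = 2^(n/4) and let ĝ(s) = Σ_x g(x) (-1)^(s·x) be the Fourier
   coefficients of g.  For s ≠ 0, S_f = {x ≠ 0 | s·x even} has N/2 - 1 elements and
   the sum of g over it is (Σ_x g(x) + ĝ(s))/2 - g(0), so the average of g over S_f
   differs from its global mean by at most (|ĝ(s)| + 4)/(N - 2); for s = 0 the
   difference is at most 2/(N - 1).  Hence, once N ≥ 32, every s for which ¬⊕_s is
   not 1/r-independent from g satisfies |ĝ(s)| r > N - 2 - 4r ≥ N/2, while Parseval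
   gives Σ_s ĝ(s)^2 = N^2: there are at most 4r^2 = 2^(n/2+2) such s.  For n ≤ 4
   the bound already exceeds 2^n. *)

Lemma half_ratio (R : numFieldType) (a b : R) : (a / 2) / (b / 2) = a / b.
Proof. by rewrite invf_div mulrA divfK // pnatr_eq0. Qed.

Lemma avg_shift_dev_le (R : realFieldType) (N M S b : R) :
  0 < M <= N -> `|S| <= N -> `|(S + b) / M - S / N| * M <= `|b| + (N - M).
Proof.
case/andP=> M_gt0 le_MN le_SN; have N_gt0 : 0 < N by exact: lt_le_trans le_MN.
have -> : `|(S + b) / M - S / N| * M = `|b + S / N * (N - M)|.
  rewrite -[M in _ * M]gtr0_norm // -normrM; congr `|_|.
  by field; rewrite !gt_eqF.
apply: (le_trans (ler_normD _ _)); rewrite lerD2l normrM [`|N - M|]ger0_norm ?subr_ge0 //.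
apply: ler_piMl; first by rewrite subr_ge0.
by rewrite normrM normfV (gtr0_norm N_gt0) ler_pdivrMr // mul1r.
Qed.

Lemma card_mulr_le_sum (R : numDomainType) (T : finType) (A : {set T})
    (f : T -> R) (t : R) :
  (forall x, 0 <= f x) -> (forall x, x \in A -> t <= f x) ->
  #|A|%:R * t <= \sum_x f x.
Proof.
move=> f_ge0 le_tf; rewrite mulr_natl -sumr_const.
apply: le_trans (ler_sum _ le_tf) _.
by rewrite [X in _ <= X](bigID (mem A)) /= lerDl sumr_ge0.
Qed.

Lemma affine_le_pow4 (R : realFieldType) (r : R) :
  0 < r -> 32 <= r ^+ 4 -> 8 * r + 4 <= r ^+ 4.
Proof.
move=> r_gt0 r4_ge32.
have r_ge2 : 2 <= r.
  rewrite leNgt; apply/negP => r_lt2.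
  have : r ^+ 4 <= 2 ^+ 4 by rewrite lerXn2r ?nnegrE ?ltW.
  lra.
have : 8 <= r ^+ 3 by rewrite (_ : 8 = 2 ^+ 3) ?lerXn2r ?nnegrE //; lra.
rewrite exprS; nra.
Qed.

Lemma powR_exprn (R : realType) (a x : R) (k : nat) :
  (a `^ x) ^+ k = a `^ (x * k%:R).
Proof. by rewrite -powR_mulrn ?powR_ge0 // powRrM. Qed.

Section Walsh.

Variables (R : numFieldType) (n : nat).
Implicit Types (s x y z : cube n) (h : cube n -> R).

Definition zero_cube : cube n := [ffun=> false].
Definition xor_cube x y : cube n := [ffun i => x i (+) y i].
Definition walsh s x : R := \prod_(i < n) (-1) ^+ (s i && x i).
Definition fourier h s : R := \sum_x h x * walsh s x.

Lemma card_cube : #|{: cube n}| = (2 ^ n)%N.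
Proof. by rewrite card_ffun card_bool card_ord. Qed.

Lemma walshE s x : walsh s x = (-1) ^+ odd (\sum_(i < n) (s i && x i)).
Proof. by rewrite /walsh prodrXr signr_odd. Qed.

Lemma neg_parity_walsh s x : (neg_parity s x == 1%N)%:R = (1 + walsh s x) / 2 :> R.
Proof.
rewrite walshE /neg_parity modn2.
case: odd; rewrite /= ?expr1 ?expr0 ?subrr ?mul0r //.
by rewrite -mulr2n divff // pnatr_eq0.
Qed.

Lemma walshC s x : walsh s x = walsh x s.
Proof. by apply: eq_bigr => i _; rewrite andbC. Qed.

Lemma walshx0 s : walsh s zero_cube = 1.
Proof. by rewrite /walsh big1 // => i _; rewrite ffunE andbF. Qed.

Lemma walshM s x y : walsh s x * walsh s y = walsh s (xor_cube x y).
Proof.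
rewrite /walsh -big_split /=; apply: eq_bigr => i _; rewrite /xor_cube ffunE.
by case: (s i); case: (x i); case: (y i); rewrite /= ?expr0 ?expr1 ?mul1r ?mulN1r ?opprK.
Qed.

Lemma xor_cube_eq0 x y : (xor_cube x y == zero_cube) = (x == y).
Proof.
apply/eqP/eqP => [xy0|->]; last by apply/ffunP => i; rewrite !ffunE addbb.
apply/ffunP => i; move/ffunP/(_ i): xy0; rewrite !ffunE.
by case: (x i); case: (y i).
Qed.

Lemma sum_walsh z :
  \sum_s walsh s z = if z == zero_cube then (2 ^ n)%:R else 0.
Proof.
case: eqP => [->|/eqP nz].
  by rewrite (eq_bigr (fun=> 1)) ?sumr_const ?card_cube // => s _; rewrite walshx0.
have [i zi] : exists i, z i.
  apply/existsP; apply: contraR nz; rewrite negb_exists => /forallP z0.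
  by apply/eqP/ffunP => j; rewrite ffunE; apply/negbTE/z0.
pose flip s : cube n := [ffun j => if j == i then ~~ s j else s j].
have flipK : involutive flip.
  by move=> s; apply/ffunP => j; rewrite !ffunE; case: eqP => // ->; rewrite negbK.
have walsh_flip s : walsh (flip s) z = - walsh s z.
  rewrite /walsh (bigD1 i) //= [in RHS](bigD1 i) //= ffunE eqxx zi.
  rewrite (eq_bigr (fun j => (-1) ^+ (s j && z j))) => [|j /negbTE ji]; last first.
    by rewrite ffunE ji.
  by case: (s i); rewrite /= ?expr1 ?expr0 ?mulN1r ?mul1r ?opprK.
apply/eqP; rewrite -eqNr; apply/eqP.
rewrite {2}(reindex_inj (inv_inj flipK)) /= -sumrN.
by apply: eq_bigr => s _; rewrite walsh_flip.
Qed.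

Lemma parseval h : \sum_s fourier h s ^+ 2 = (2 ^ n)%:R * \sum_x h x ^+ 2.
Proof.
have sqr_sum s : fourier h s ^+ 2 =
    \sum_x \sum_y h x * h y * walsh s (xor_cube x y).
  rewrite expr2 /fourier big_distrlr /=; apply: eq_bigr => x _.
  by apply: eq_bigr => y _; rewrite mulrACA walshM.
under eq_bigr => s _ do rewrite sqr_sum.
rewrite exchange_big mulr_sumr; apply: eq_bigr => x _.
rewrite exchange_big /= (bigD1 x) //= [X in _ + X]big1 => [|y yx]; last first.
  by rewrite -mulr_sumr sum_walsh xor_cube_eq0 eq_sym (negbTE yx) mulr0.
by rewrite -mulr_sumr sum_walsh xor_cube_eq0 eqxx addr0 mulrC expr2.
Qed.

Lemma S_f_neg_parity_ind s x :
  (x \in S_f (neg_parity s))%:R = (1 + walsh s x) / 2 - (x == zero_cube)%:R :> R.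
Proof.
rewrite !inE; case: (x =P zero_cube) => [->|_] /=.
  by rewrite walshx0 -mulr2n divff ?pnatr_eq0 // subrr.
by rewrite mulr0n subr0 neg_parity_walsh.
Qed.

Lemma sum_S_f s h :
  \sum_(x in S_f (neg_parity s)) h x =
  (\sum_x h x + \sum_x h x * walsh s x) / 2 - h zero_cube.
Proof.
rewrite big_mkcond /=.
under eq_bigr => x _ do rewrite -mulrb -mulr_natl S_f_neg_parity_ind mulrBl.
rewrite sumrB -big_split mulr_suml /=; congr (_ - _).
  by apply: eq_bigr => x _; rewrite mulrAC mulrDl mul1r [walsh s x * _]mulrC.
by rewrite (bigD1 zero_cube) //= eqxx mul1r big1 ?addr0 // => x /negbTE ->; rewrite mul0r.
Qed.

End Walsh.

Section NegativeParityIndependence.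

Variables (R : realType) (n : nat) (g : cube n -> R).
Hypothesis g_sign : forall x, g x = 1 \/ g x = -1.

Local Notation N := ((2 ^ n)%:R : R).

Lemma avg_setT (h : cube n -> R) : avg [set: cube n] h = (\sum_x h x) / N.
Proof.
by rewrite /avg cardsT card_cube; congr (_ / _); apply: eq_bigl => x; rewrite inE.
Qed.

Lemma card_S_f_neg_parity s :
  #|S_f (neg_parity s)|%:R = (N + (if s == zero_cube n then N else 0)) / 2 - 1 :> R.
Proof.
rewrite -sumr_const sum_S_f sumr_const card_cube.
by under eq_bigr => x _ do rewrite mul1r walshC; rewrite sum_walsh.
Qed.

Lemma avg_S_f_neg_parity s (h : cube n -> R) : s != zero_cube n ->
  avg (S_f (neg_parity s)) h =
  (\sum_x h x + (fourier h s - 2 * h (zero_cube n))) / (N - 2).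
Proof.
move=> /negbTE s_nz; rewrite /avg sum_S_f card_S_f_neg_parity s_nz addr0.
by rewrite -[RHS]half_ratio; congr (_ / _); rewrite /fourier; field.
Qed.

Lemma avg_S_f_neg_parity0 (h : cube n -> R) :
  avg (S_f (neg_parity (zero_cube n))) h = (\sum_x h x - h (zero_cube n)) / (N - 1).
Proof.
rewrite /avg sum_S_f card_S_f_neg_parity eqxx.
have -> : \sum_x h x * walsh R (zero_cube n) x = \sum_x h x.
  by apply: eq_bigr => x _; rewrite walshC walshx0 mulr1.
by congr (_ / _); field.
Qed.

Local Notation dev s := (avg (S_f (neg_parity s)) g - avg [set: cube n] g).

Lemma norm_sign x : `|g x| = 1.
Proof. by case: (g_sign x) => ->; rewrite ?normrN normr1. Qed.

Lemma sqr_sign x : g x ^+ 2 = 1.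
Proof. by case: (g_sign x) => ->; rewrite ?sqrrN expr1n. Qed.

Lemma norm_sum_sign_le : `|\sum_x g x| <= N.
Proof.
apply: le_trans (ler_norm_sum _ _ _) _.
by rewrite (eq_bigr (fun=> 1)) => [|x _]; rewrite ?sumr_const ?card_cube ?norm_sign.
Qed.

Lemma dev_neg_parity_le s : s != zero_cube n -> 2 < N ->
  `|dev s| * (N - 2) <= `|fourier g s| + 4.
Proof.
move=> s_nz N_gt2; rewrite avg_S_f_neg_parity // avg_setT.
apply: le_trans (@avg_shift_dev_le R _ _ _ _ _ norm_sum_sign_le) _.
  by apply/andP; split; lra.
have := ler_normB (fourier g s) (2 * g (zero_cube n)).
rewrite normrM norm_sign mulr1 ger0_norm //; lra.
Qed.

Lemma dev_neg_parity0_le : 1 < N -> `|dev (zero_cube n)| * (N - 1) <= 2.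
Proof.
move=> N_gt1; rewrite avg_S_f_neg_parity0 avg_setT.
apply: le_trans (@avg_shift_dev_le R _ _ _ _ _ norm_sum_sign_le) _.
  by apply/andP; split; lra.
rewrite normrN norm_sign; lra.
Qed.

Lemma not_independent_fourier_gt s (r : R) : 0 < r -> 8 * r + 4 <= N ->
  ~~ xi_independent (neg_parity s) g r^-1 -> N - 2 - 4 * r < `|fourier g s| * r.
Proof.
move=> r_gt0 N_ge; rewrite /xi_independent -ltNge -(ltr_pM2r r_gt0) mulVf ?gt_eqF //.
have N_gt2 : 2 < N by lra.
have [-> | s_nz] := eqVneq s (zero_cube n) => dev_gt.
  have dev_le : `|dev (zero_cube n)| * (N - 1) <= 2 by apply: dev_neg_parity0_le; lra.
  nra.
move: (dev_neg_parity_le s_nz N_gt2) dev_gt (normr_ge0 (dev s)).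
move: `|dev s| `|fourier g s| => D A dev_le dev_gt D_ge0.
have : N - 2 < D * r * (N - 2) by rewrite ltr_pMl //; lra.
have : D * r * (N - 2) <= (A + 4) * r by rewrite mulrAC ler_pM2r.
lra.
Qed.

Lemma card_not_independent_le (r : R) : 0 < r -> 8 * r + 4 <= N ->
  #|[set s | ~~ xi_independent (neg_parity s) g r^-1]|%:R <= 4 * r ^+ 2.
Proof.
move=> r_gt0 N_ge; set T := N - 2 - 4 * r.
have T_gt0 : 0 < T by rewrite /T; lra.
have sum_sq : \sum_s (r * fourier g s) ^+ 2 = r ^+ 2 * N ^+ 2.
  under eq_bigr => s _ do rewrite exprMn.
  rewrite -mulr_sumr parseval (eq_bigr (fun=> 1)) => [|x _]; last exact: sqr_sign.
  by rewrite sumr_const card_cube expr2.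
have card_T : #|[set s | ~~ xi_independent (neg_parity s) g r^-1]|%:R * T ^+ 2
    <= r ^+ 2 * N ^+ 2.
  rewrite -sum_sq; apply: card_mulr_le_sum => s; first exact: sqr_ge0.
  rewrite inE => /(not_independent_fourier_gt r_gt0 N_ge) T_lt.
  rewrite -[(r * _) ^+ 2]real_normK ?num_real // normrM (gtr0_norm r_gt0) mulrC.
  by rewrite lerXn2r ?nnegrE ?ltW // (lt_trans T_gt0).
rewrite -(ler_pM2r (exprn_gt0 2 T_gt0)); apply: (le_trans card_T).
have : N ^+ 2 <= 4 * T ^+ 2 by rewrite /T; nra.
have : 0 <= r ^+ 2 by exact: sqr_ge0.
nra.
Qed.

End NegativeParityIndependence.

Theorem mainTheorem5 (R : realType) (n : nat) (g : cube n -> R)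
  (hg : forall x, g x = 1 \/ g x = -1) :
  (#|[set s : cube n |
      ~~ xi_independent (neg_parity s) g (2 `^ (- (n%:R / 4)))]|%:R : R)
    <= 2 `^ (n%:R / 2 + 2).
Proof.
set r : R := 2 `^ (n%:R / 4).
have r_gt0 : 0 < r by exact: powR_gt0.
have r4 : r ^+ 4 = (2 ^ n)%:R.
  by rewrite powR_exprn divfK ?pnatr_eq0 // powR_mulrn // natrX.
have -> : 2 `^ (n%:R / 2 + 2) = 4 * r ^+ 2 :> R.
  rewrite powRD ?pnatr_eq0 ?implybT // powR_exprn powR_mulrn // mulrC.
  by congr (_ * 2 `^ _); [rewrite -natrX | field].
rewrite powRN -/r.
have [n_le4 | n_gt4] := leqP n 4.
  have r4_le : r ^+ 4 <= 16 by rewrite r4 (_ : 16 = (2 ^ 4)%:R) // ler_nat leq_pexp2l.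
  apply: (le_trans (y := r ^+ 4)).
    by rewrite r4 -card_cube ler_nat max_card.
  have : 0 <= r ^+ 2 by exact: sqr_ge0.
  rewrite (exprM r 2 2); nra.
apply: (card_not_independent_le hg r_gt0); rewrite -r4 affine_le_pow4 //.
by rewrite r4 (_ : 32 = (2 ^ 5)%:R) // ler_nat leq_pexp2l.
Qed.
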